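(* Let $G=(V,E)$ be a connected quartic graph which is Bakry-\'Emery curvature sharp at every vertex and in which every edge is contained in exactly one triangle. Then $G$ is isomorphic to the Cartesian product $K_3\times K_3$.
   Context: $\Delta f(x)=\sum_{y\sim x}(f(y)-f(x))$, $2\Gamma(f,g)=\Delta(fg)-f\Delta g-g\Delta f$, $2\Gamma_2(f,g)=\Delta\Gamma(f,g)-\Gamma(f,\Delta g)-\Gamma(g,\Delta f)$; $\mathcal K_\infty(x)$ is the supremum of $K$ with $\Gamma_2(f,f)(x)\ge K\Gamma(f,f)(x)$ for all $f:V\to\mathbb R$. A vertex $x$ of a $D$-regular graph is curvature sharp if $\mathcal K_\infty(x)=2+\#_\Delta(x)/D$, where $\#_\Delta(x)$ is the number of triangles containing $x$. *)

From Stdlib Require Import Reals List Relations ClassicalEpsilon.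
Import ListNotations.
Open Scope R_scope.

(* A locally finite simple graph on an arbitrary vertex type V is given by a
   neighbour function N : V -> list V; y ~ x iff In y (N x). *)
Definition simple_graph {V : Type} (N : V -> list V) : Prop :=
  (forall x y, In y (N x) -> In x (N y)) /\
  (forall x, ~ In x (N x)) /\
  (forall x, NoDup (N x)).

Definition regular {V : Type} (N : V -> list V) (D : nat) : Prop :=
  forall x, length (N x) = D.

Definition connected {V : Type} (N : V -> list V) : Prop :=
  inhabited V /\
  forall x y, clos_refl_trans V (fun a b => In b (N a)) x y.

Definition sumR (l : list R) : R := fold_right Rplus 0 l.

Definition lap {V : Type} (N : V -> list V) (f : V -> R) (x : V) : R :=
  sumR (map (fun y => f y - f x) (N x)).

Definition Gam {V : Type} (N : V -> list V) (f g : V -> R) (x : V) : R :=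
  / 2 * (lap N (fun z => f z * g z) x - f x * lap N g x - g x * lap N f x).

Definition Gam2 {V : Type} (N : V -> list V) (f g : V -> R) (x : V) : R :=
  / 2 * (lap N (Gam N f g) x - Gam N f (lap N g) x - Gam N g (lap N f) x).

Definition curv_set {V : Type} (N : V -> list V) (x : V) (K : R) : Prop :=
  forall f : V -> R, Gam2 N f f x >= K * Gam N f f x.

Definition K_inf_eq {V : Type} (N : V -> list V) (x : V) (c : R) : Prop :=
  is_lub (curv_set N x) c.

Definition indicR (P : Prop) : R :=
  if excluded_middle_informative P then 1 else 0.

(* Number of triangles containing x: unordered adjacent pairs of neighbours. *)
Definition ntri {V : Type} (N : V -> list V) (x : V) : R :=
  / 2 * sumR (map (fun y => sumR (map (fun z => indicR (In z (N y))) (N x))) (N x)).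

Definition curvature_sharp {V : Type} (N : V -> list V) (D : nat) (x : V) : Prop :=
  K_inf_eq N x (2 + ntri N x / INR D).

Definition edge_in_unique_triangle {V : Type} (N : V -> list V) : Prop :=
  forall x y, In y (N x) -> exists! z, In z (N x) /\ In z (N y).

Inductive three : Type := T0 | T1 | T2.

Definition k33_adj (p q : three * three) : Prop :=
  (fst p = fst q /\ snd p <> snd q) \/ (snd p = snd q /\ fst p <> fst q).

Definition iso_to_K3xK3 {V : Type} (N : V -> list V) : Prop :=
  exists (f : V -> three * three) (g : three * three -> V),
    (forall x, g (f x) = x) /\ (forall p, f (g p) = p) /\
    (forall x y, In y (N x) <-> k33_adj (f x) (f y)).

From Stdlib Require Import Reals List Permutation Lra Lia Classical Relations ClassicalEpsilon.
Import ListNotations.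
Open Scope R_scope.

(* In a 4-regular graph in which every edge lies in exactly one triangle, the
   neighbourhood of a vertex x splits into two disjoint edges {a, A} and {b, B};
   so x lies in two triangles and curvature sharpness at x means K_inf(x) = 5/2.
   If a neighbour z of a outside the triangle {x, a, A} were adjacent to neither
   b nor B, the function equal to 1 on a, A, z, to -1 on b, B and to 0 elsewhere
   would have Gamma(f)(x) = 2 and Gamma_2(f)(x) = 17/4 < 5/2 * 2.  Hence of the two
   outer neighbours of a one is adjacent to b and the other to B, and likewise
   for A.  Then x, a, A, b, B and these four vertices span a copy of K3 x K3 in
   which every vertex already has its four neighbours, so by connectedness the
   copy is the whole graph. *)

Lemma sumR_perm (l l' : list R) : Permutation l l' -> sumR l = sumR l'.
Proof. induction 1; simpl; lra. Qed.

Lemma sumR_map_perm {A : Type} (h : A -> R) (l l' : list A) :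
  Permutation l l' -> sumR (map h l) = sumR (map h l').
Proof. intro H; apply sumR_perm, Permutation_map, H. Qed.

Lemma sumR_map_const {A : Type} (c : R) (l : list A) :
  sumR (map (fun _ => c) l) = INR (length l) * c.
Proof.
  induction l as [|y l IH]; [simpl; lra|].
  cbn [map length]; rewrite S_INR; unfold sumR in *; simpl; rewrite IH; lra.
Qed.

Lemma indicR_true (P : Prop) : P -> indicR P = 1.
Proof. intro H; unfold indicR; destruct excluded_middle_informative; tauto. Qed.

Lemma indicR_false (P : Prop) : ~ P -> indicR P = 0.
Proof. intro H; unfold indicR; destruct excluded_middle_informative; tauto. Qed.

Lemma sumR_indicR_none {A : Type} (P : A -> Prop) (l : list A) :
  (forall z, In z l -> ~ P z) -> sumR (map (fun z => indicR (P z)) l) = 0.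
Proof.
  induction l as [|y l IH]; intro H; simpl; [lra|].
  rewrite indicR_false, IH by (simpl in H; auto). lra.
Qed.

Lemma sumR_indicR_unique {A : Type} (P : A -> Prop) (l : list A) :
  NoDup l -> (exists! z, In z l /\ P z) -> sumR (map (fun z => indicR (P z)) l) = 1.
Proof.
  induction l as [|y l IH]; intros Hnd [z [[Hz HPz] Huniq]]; [destruct Hz|].
  inversion_clear Hnd as [|? ? Hy Hnd'].
  simpl. destruct Hz as [<- | Hz].
  - rewrite indicR_true, sumR_indicR_none; auto; [lra|].
    intros w Hw HPw. apply Hy. rewrite (Huniq w); simpl; auto.
  - rewrite indicR_false, IH; auto; [lra| |].
    + exists z. split; auto. intros w [Hw HPw]. apply Huniq. simpl; auto.
    + intro HPy. apply Hy. rewrite <- (Huniq y); simpl; auto.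
Qed.

Section Laplacian.
Variables (V : Type) (N : V -> list V).

Lemma lap_perm (h : V -> R) y l :
  Permutation (N y) l -> lap N h y = sumR (map (fun w => h w - h y) l).
Proof. apply sumR_map_perm. Qed.

Lemma Gam_eq (f g : V -> R) x :
  Gam N f g x = / 2 * sumR (map (fun y => (f y - f x) * (g y - g x)) (N x)).
Proof.
  unfold Gam, lap. f_equal.
  induction (N x) as [|y l IH]; simpl; lra.
Qed.

Lemma curvature_bound_of_lub x c (f : V -> R) :
  K_inf_eq N x c -> 0 < Gam N f f x -> c * Gam N f f x <= Gam2 N f f x.
Proof.
  intros [_ Hleast] Hpos.
  assert (Hub : is_upper_bound (curv_set N x) (Gam2 N f f x / Gam N f f x)).
  { intros K HK. specialize (HK f).
    apply (Rmult_le_reg_r (Gam N f f x)); auto.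
    unfold Rdiv; rewrite Rmult_assoc, Rinv_l, Rmult_1_r; lra. }
  specialize (Hleast _ Hub).
  apply (Rmult_le_compat_r (Gam N f f x)) in Hleast; [|lra].
  unfold Rdiv in Hleast; rewrite Rmult_assoc, Rinv_l, Rmult_1_r in Hleast; lra.
Qed.

Local Ltac eval_sums :=
  cbn [sumR map fold_right];
  repeat match goal with E : ?g ?v = _ |- context [?g ?v] => rewrite E end; lra.

Lemma Gam2_test_function (f : V -> R) x a A b B z w p1 p2 q1 q2 r1 r2 :
  Permutation (N x) [a;A;b;B] -> Permutation (N a) [x;A;z;w] ->
  Permutation (N A) [x;a;p1;p2] -> Permutation (N b) [x;B;q1;q2] ->
  Permutation (N B) [x;b;r1;r2] ->
  f x = 0 -> f a = 1 -> f A = 1 -> f b = -1 -> f B = -1 -> f z = 1 -> f w = 0 ->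
  f p1 = 0 -> f p2 = 0 -> f q1 = 0 -> f q2 = 0 -> f r1 = 0 -> f r2 = 0 ->
  Gam N f f x = 2 /\ Gam2 N f f x = 17/4.
Proof.
  intros Px Pa PA Pb PB. intros.
  assert (Gam_at : forall y l, Permutation (N y) l ->
    Gam N f f y = / 2 * sumR (map (fun v => (f v - f y) * (f v - f y)) l)).
  { intros y l Py. rewrite Gam_eq. f_equal. apply sumR_map_perm, Py. }
  assert (Lx : lap N f x = 0) by (rewrite (lap_perm _ _ _ Px); eval_sums).
  assert (La : lap N f a = -2) by (rewrite (lap_perm _ _ _ Pa); eval_sums).
  assert (LA : lap N f A = -3) by (rewrite (lap_perm _ _ _ PA); eval_sums).
  assert (Lb : lap N f b = 3) by (rewrite (lap_perm _ _ _ Pb); eval_sums).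
  assert (LB : lap N f B = 3) by (rewrite (lap_perm _ _ _ PB); eval_sums).
  assert (Gx : Gam N f f x = 2) by (rewrite (Gam_at _ _ Px); eval_sums).
  assert (Ga : Gam N f f a = 1) by (rewrite (Gam_at _ _ Pa); eval_sums).
  assert (GA : Gam N f f A = 3/2) by (rewrite (Gam_at _ _ PA); eval_sums).
  assert (Gb : Gam N f f b = 3/2) by (rewrite (Gam_at _ _ Pb); eval_sums).
  assert (GB : Gam N f f B = 3/2) by (rewrite (Gam_at _ _ PB); eval_sums).
  split; [exact Gx|].
  unfold Gam2. rewrite Gam_eq, (lap_perm _ _ _ Px), (sumR_map_perm _ _ _ Px).
  eval_sums.
Qed.

End Laplacian.

Lemma NoDup4_neq {A : Type} (a b c d : A) : NoDup [a;b;c;d] ->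
  a <> b /\ a <> c /\ a <> d /\ b <> c /\ b <> d /\ c <> d.
Proof.
  intro H. inversion_clear H as [|? ? H1 H2]. inversion_clear H2 as [|? ? H3 H4].
  inversion_clear H4 as [|? ? H5 H6]. simpl in *. intuition subst; tauto.
Qed.

Lemma Permutation_two_front {A : Type} (l : list A) p q :
  NoDup l -> length l = 4%nat -> In p l -> In q l -> p <> q ->
  exists o1 o2, Permutation l [p;q;o1;o2].
Proof.
  intros Hnd Hl Hp Hq Hpq.
  destruct (in_split _ _ Hp) as [l1 [l2 ->]].
  assert (Hq' : In q (l1 ++ l2)).
  { apply in_app_or in Hq; apply in_or_app; simpl in Hq; intuition congruence. }
  destruct (in_split _ _ Hq') as [m1 [m2 E]].
  assert (Hlen : length (m1 ++ m2) = 2%nat).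
  { apply (f_equal (@length A)) in E. rewrite !length_app in *. simpl in *. lia. }
  destruct (m1 ++ m2) as [|o1 [|o2 [|]]] eqn:Em; simpl in Hlen; try discriminate.
  exists o1, o2.
  rewrite <- Permutation_middle. apply perm_skip.
  rewrite E, <- Permutation_middle, Em. reflexivity.
Qed.

Lemma in_perm {A : Type} (l l' : list A) y : Permutation l l' -> In y l' -> In y l.
Proof. intros HP H. eapply Permutation_in; [symmetry; exact HP | exact H]. Qed.

Lemma injective_of_NoDup_map {A B : Type} (g : A -> B) (l : list A) :
  NoDup (map g l) -> forall p q, In p l -> In q l -> g p = g q -> p = q.
Proof.
  induction l as [|y l IH]; simpl; [tauto|].
  intros Hnd p q Hp Hq E. inversion_clear Hnd as [|? ? Hy Hnd'].
  destruct Hp as [<-|Hp], Hq as [<-|Hq]; auto.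
  - exfalso. apply Hy. rewrite E. apply in_map, Hq.
  - exfalso. apply Hy. rewrite <- E. apply in_map, Hp.
Qed.

Definition k33_next (t : three) : three :=
  match t with T0 => T1 | T1 => T2 | T2 => T0 end.

Definition k33_nbrs (p : three * three) : list (three * three) :=
  let (i, j) := p in
  [(i, k33_next j); (i, k33_next (k33_next j)); (k33_next i, j); (k33_next (k33_next i), j)].

Definition k33_vertices : list (three * three) :=
  list_prod [T0; T1; T2] [T0; T1; T2].

Lemma k33_vertices_complete p : In p k33_vertices.
Proof. destruct p as [[] []]; simpl; tauto. Qed.

Lemma k33_nbrs_adj p q : In q (k33_nbrs p) <-> k33_adj p q.
Proof.
  destruct p as [[] []], q as [[] []]; unfold k33_adj; simpl;
  intuition (discriminate || congruence).
Qed.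

Lemma k33_nbrs_NoDup p : NoDup (k33_nbrs p).
Proof. destruct p as [[] []]; simpl; repeat constructor; simpl; intuition discriminate. Qed.

Lemma iso_of_k33_embedding (V : Type) (N : V -> list V) (g : three * three -> V) :
  regular N 4 -> connected N ->
  NoDup (map g k33_vertices) -> (forall p, incl (map g (k33_nbrs p)) (N (g p))) ->
  iso_to_K3xK3 N.
Proof.
  intros Hreg [_ Hconn] Hnd Hhom.
  assert (ginj : forall p q, g p = g q -> p = q)
    by (intros p q; apply (injective_of_NoDup_map g k33_vertices);
        auto using k33_vertices_complete).
  assert (Hnbrs : forall p y, In y (N (g p)) <-> In y (map g (k33_nbrs p))).
  { intros p y. split; [|apply Hhom].
    apply NoDup_length_incl; auto.
    - apply FinFun.Injective_map_NoDup; [exact ginj | apply k33_nbrs_NoDup].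
    - rewrite Hreg, length_map. destruct p as [[] []]; auto. }
  assert (image_closed : forall u w, clos_refl_trans V (fun a b => In b (N a)) u w ->
            (exists p, g p = u) -> exists q, g q = w).
  { intros u w H. induction H as [u w Huw | u | u w z _ IH1 _ IH2]; auto.
    intros [p <-]. apply Hnbrs, in_map_iff in Huw. destruct Huw as [q [E _]]. eauto. }
  assert (surj : forall v, exists p, g p = v)
    by (intro v; apply (image_closed (g (T0, T0))); eauto).
  set (f := fun v => proj1_sig (constructive_indefinite_description _ (surj v))).
  assert (gf : forall v, g (f v) = v)
    by (intro v; exact (proj2_sig (constructive_indefinite_description _ (surj v)))).
  exists f, g. split; [exact gf|]. split; [intro p; apply ginj, gf|].
  intros x y. rewrite <- k33_nbrs_adj, <- (gf x) at 1. rewrite <- (gf y) at 1.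
  rewrite Hnbrs. split.
  - intro H. apply in_map_iff in H. destruct H as [r [E Hr]]. rewrite (ginj _ _ E) in Hr. exact Hr.
  - intro H. apply in_map, H.
Qed.

Section QuarticGraph.
Variables (V : Type) (N : V -> list V).
Hypotheses (Hg : simple_graph N) (Hreg : regular N 4) (Htri : edge_in_unique_triangle N).

Lemma adj_sym x y : In y (N x) -> In x (N y).
Proof. apply Hg. Qed.

Lemma adj_irrefl x : ~ In x (N x).
Proof. apply Hg. Qed.

Lemma nbrs_NoDup x : NoDup (N x).
Proof. apply Hg. Qed.

Local Ltac in_nbrs := eapply in_perm; [eassumption | simpl; tauto].

Local Ltac distinct := repeat constructor; simpl; intuition (subst; eauto using adj_irrefl).

Lemma apex_unique x y z w :
  In y (N x) -> In z (N x) -> In z (N y) -> In w (N x) -> In w (N y) -> w = z.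
Proof.
  intros Hy Hz Hzy Hw Hwy. destruct (Htri x y Hy) as [t [_ Ht]].
  rewrite <- (Ht z), <- (Ht w); auto.
Qed.

Lemma not_adj_of_apex x y z w :
  In y (N x) -> In z (N x) -> In z (N y) -> In w (N y) -> w <> z -> ~ In w (N x).
Proof. intros Hy Hz Hzy Hwy Hwz Hw. exact (Hwz (apex_unique x y z w Hy Hz Hzy Hw Hwy)). Qed.

Lemma nbrs_perm_of_incl v L : NoDup L -> length L = 4%nat -> incl L (N v) -> Permutation (N v) L.
Proof.
  intros Hnd Hlen Hincl. symmetry. apply NoDup_Permutation_bis; auto.
  rewrite Hreg, Hlen; lia.
Qed.

Lemma nbrs_two_front x y z : In y (N x) -> In z (N x) -> y <> z ->
  exists o1 o2, Permutation (N x) [y;z;o1;o2].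
Proof. apply Permutation_two_front; [apply nbrs_NoDup | apply Hreg]. Qed.

Lemma remaining_nbrs_adjacent x a A c d :
  Permutation (N x) [a;A;c;d] -> In A (N a) -> In d (N c).
Proof.
  intros Px HaA.
  destruct (NoDup4_neq _ _ _ _ (Permutation_NoDup Px (nbrs_NoDup x))) as (_ & ac & _ & Ac & _ & _).
  assert (Ia : In a (N x)) by in_nbrs. assert (IA : In A (N x)) by in_nbrs.
  assert (Ic : In c (N x)) by in_nbrs.
  destruct (Htri x c Ic) as [q [[Hq Hqc] _]].
  apply (Permutation_in _ Px) in Hq. destruct Hq as [<-|[<-|[<-|[<-|[]]]]].
  - exfalso; apply Ac; symmetry. apply (apex_unique x a A c); auto using adj_sym.
  - exfalso; apply ac; symmetry. apply (apex_unique x A a c); auto using adj_sym.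
  - exfalso. exact (adj_irrefl _ Hqc).
  - exact Hqc.
Qed.

Lemma two_triangles x : exists a A b B,
  Permutation (N x) [a;A;b;B] /\ In A (N a) /\ In B (N b).
Proof.
  assert (Hy : exists y, In y (N x)).
  { pose proof (Hreg x) as Hl. destruct (N x) as [|y l]; [discriminate|]. exists y; simpl; auto. }
  destruct Hy as [y Hy]. destruct (Htri x y Hy) as [P [[HP HPy] _]].
  assert (yP : y <> P) by (intros ->; exact (adj_irrefl _ HPy)).
  destruct (nbrs_two_front x y P Hy HP yP) as (o1 & o2 & Px).
  exists y, P, o1, o2. repeat split; auto.
  exact (remaining_nbrs_adjacent x y P o1 o2 Px HPy).
Qed.

Lemma outer_nbrs x y P : In y (N x) -> In P (N x) -> In P (N y) ->
  exists o1 o2, Permutation (N y) [x;P;o1;o2] /\ ~ In o1 (N x) /\ ~ In o2 (N x).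
Proof.
  intros Hy HP HPy.
  assert (xP : x <> P) by (intros ->; exact (adj_irrefl _ HP)).
  destruct (nbrs_two_front y x P (adj_sym _ _ Hy) HPy xP) as (o1 & o2 & Py).
  destruct (NoDup4_neq _ _ _ _ (Permutation_NoDup Py (nbrs_NoDup y))) as (_ & _ & _ & P1 & P2 & _).
  exists o1, o2. split; [exact Py|].
  split; apply (not_adj_of_apex x y P); auto; in_nbrs.
Qed.

Lemma ntri_quartic x : ntri N x = 2.
Proof.
  unfold ntri. rewrite (map_ext_in _ (fun _ => 1)).
  - rewrite sumR_map_const, Hreg. simpl. lra.
  - intros y Hy. apply sumR_indicR_unique; [apply nbrs_NoDup | exact (Htri x y Hy)].
Qed.

Lemma sharp_curvature_quartic x : curvature_sharp N 4 x -> K_inf_eq N x (5/2).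
Proof.
  unfold curvature_sharp. rewrite ntri_quartic.
  replace (2 + 2 / INR 4) with (5/2) by (simpl; field). auto.
Qed.


Lemma outer_nbr_meets_far_triangle x a A b B z :
  curvature_sharp N 4 x -> Permutation (N x) [a;A;b;B] -> In A (N a) -> In B (N b) ->
  In z (N a) -> z <> x -> z <> A -> In z (N b) \/ In z (N B).
Proof.
  intros Hs Px HaA HbB Hz zx zA.
  destruct (classic (In z (N b))) as [|zb]; [now left|].
  destruct (classic (In z (N B))) as [|zB]; [now right|].
  exfalso.
  destruct (NoDup4_neq _ _ _ _ (Permutation_NoDup Px (nbrs_NoDup x)))
    as (aA & ab & aB & Ab & AB & bB).
  assert (Ia : In a (N x)) by in_nbrs. assert (IA : In A (N x)) by in_nbrs.
  assert (Ib : In b (N x)) by in_nbrs. assert (IB : In B (N x)) by in_nbrs.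
  assert (nxz : ~ In z (N x)) by exact (not_adj_of_apex x a A z Ia IA HaA Hz zA).
  assert (nAz : ~ In z (N A)).
  { apply (not_adj_of_apex A a x z); auto using adj_sym. }
  destruct (outer_nbrs x a A Ia IA HaA) as (o1 & o2 & Pa0 & no1 & no2).
  assert (Hw : exists w, Permutation (N a) [x;A;z;w] /\ ~ In w (N x) /\ w <> z).
  { destruct (NoDup4_neq _ _ _ _ (Permutation_NoDup Pa0 (nbrs_NoDup a)))
      as (_ & _ & _ & _ & _ & o12).
    apply (Permutation_in _ Pa0) in Hz. destruct Hz as [<-|[<-|[<-|[<-|[]]]]]; try congruence.
    - exists o2; auto.
    - exists o1. repeat split; auto. rewrite Pa0. repeat constructor. }
  destruct Hw as (w & Pa & nxw & wz).
  destruct (outer_nbrs x A a IA Ia (adj_sym _ _ HaA)) as (p1 & p2 & PA & np1 & np2).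
  destruct (outer_nbrs x b B Ib IB HbB) as (q1 & q2 & Pb & nq1 & nq2).
  destruct (outer_nbrs x B b IB Ib (adj_sym _ _ HbB)) as (r1 & r2 & PB & nr1 & nr2).
  set (f := fun v => indicR (v = a \/ v = A \/ v = z) - indicR (v = b \/ v = B)).
  assert (f_pos : forall v, v = a \/ v = A \/ v = z -> ~ (v = b \/ v = B) -> f v = 1).
  { intros v H1 H2. unfold f. rewrite indicR_true, indicR_false; auto; lra. }
  assert (f_neg : forall v, v = b \/ v = B -> ~ (v = a \/ v = A \/ v = z) -> f v = -1).
  { intros v H1 H2. unfold f. rewrite indicR_false, indicR_true; auto; lra. }
  assert (f_out : forall v, ~ In v (N x) -> v <> z -> f v = 0).
  { intros v Hv vz. unfold f. rewrite !indicR_false; [lra| |]; intuition congruence. }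
  destruct (Gam2_test_function V N f x a A b B z w p1 p2 q1 q2 r1 r2 Px Pa PA Pb PB)
    as [HG HG2];
    try (apply f_out;
         [ first [assumption | apply adj_irrefl]
         | first [congruence
                 | intros ->; first [apply zb; in_nbrs | apply zB; in_nbrs | apply nAz; in_nbrs]] ]);
    try (apply f_pos; intuition congruence);
    try (apply f_neg; intuition congruence).
  pose proof (curvature_bound_of_lub V N x (5/2) f (sharp_curvature_quartic x Hs)) as Hb.
  rewrite HG, HG2 in Hb. lra.
Qed.

Lemma outer_nbrs_split x a A b B :
  curvature_sharp N 4 x -> Permutation (N x) [a;A;b;B] -> In A (N a) -> In B (N b) ->
  exists p q, Permutation (N a) [x;A;p;q] /\ In p (N b) /\ In q (N B) /\ In q (N p).
Proof.
  intros Hs Px HaA HbB.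
  destruct (NoDup4_neq _ _ _ _ (Permutation_NoDup Px (nbrs_NoDup x)))
    as (_ & ab & aB & _ & _ & _).
  assert (Ia : In a (N x)) by in_nbrs. assert (IA : In A (N x)) by in_nbrs.
  destruct (outer_nbrs x a A Ia IA HaA) as (o1 & o2 & Pa & _ & _).
  destruct (NoDup4_neq _ _ _ _ (Permutation_NoDup Pa (nbrs_NoDup a)))
    as (_ & x1 & x2 & A1 & A2 & _).
  assert (o12 : In o2 (N o1)) by exact (remaining_nbrs_adjacent a x A o1 o2 Pa IA).
  assert (meets : forall o, In o [o1;o2] -> In o (N b) \/ In o (N B)).
  { intros o Ho. apply (outer_nbr_meets_far_triangle x a A b B); auto.
    - eapply in_perm; [exact Pa | simpl in *; tauto].
    - simpl in Ho; intuition congruence.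
    - simpl in Ho; intuition congruence. }
  assert (opposite : forall c, c <> a -> In o1 (N c) -> In o2 (N c) -> False).
  { intros c ca H1 H2. apply ca.
    apply (apex_unique o1 o2 a c); auto using adj_sym; apply adj_sym; auto; in_nbrs. }
  destruct (meets o1 ltac:(simpl; tauto)) as [H1|H1];
  destruct (meets o2 ltac:(simpl; tauto)) as [H2|H2];
  try (exfalso; eapply opposite; [|exact H1|exact H2]; congruence).
  - exists o1, o2. auto.
  - exists o2, o1. repeat split; auto using adj_sym.
    rewrite Pa. repeat constructor.
Qed.

Lemma k33_embedding x : curvature_sharp N 4 x ->
  exists g : three * three -> V,
    NoDup (map g k33_vertices) /\ forall p, incl (map g (k33_nbrs p)) (N (g p)).
Proof.
  intro Hs.
  destruct (two_triangles x) as (a & A & b & B & Px & HaA & HbB).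
  assert (Px' : Permutation (N x) [A;a;b;B]) by (rewrite Px; constructor).
  destruct (outer_nbrs_split x a A b B Hs Px HaA HbB) as (u1 & u2 & Pa & u1b & u2B & u12).
  destruct (outer_nbrs_split x A a b B Hs Px' (adj_sym _ _ HaA) HbB)
    as (v1 & v2 & PA & v1b & v2B & v12).
  pose proof (NoDup4_neq _ _ _ _ (Permutation_NoDup Px (nbrs_NoDup x))) as (n1 & n2 & n3 & n4 & n5 & n6).
  pose proof (NoDup4_neq _ _ _ _ (Permutation_NoDup Pa (nbrs_NoDup a))) as (k1 & k2 & k3 & k4 & k5 & k6).
  pose proof (NoDup4_neq _ _ _ _ (Permutation_NoDup PA (nbrs_NoDup A))) as (l1 & l2 & l3 & l4 & l5 & l6).
  assert (Ia : In a (N x)) by in_nbrs. assert (IA : In A (N x)) by in_nbrs.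
  assert (Ib : In b (N x)) by in_nbrs. assert (IB : In B (N x)) by in_nbrs.
  assert (au1 : In u1 (N a)) by in_nbrs. assert (au2 : In u2 (N a)) by in_nbrs.
  assert (Av1 : In v1 (N A)) by in_nbrs. assert (Av2 : In v2 (N A)) by in_nbrs.
  assert (nxu1 : ~ In u1 (N x)) by (apply (not_adj_of_apex x a A); auto).
  assert (nxu2 : ~ In u2 (N x)) by (apply (not_adj_of_apex x a A); auto).
  assert (nxv1 : ~ In v1 (N x)) by (apply (not_adj_of_apex x A a); auto using adj_sym).
  assert (nxv2 : ~ In v2 (N x)) by (apply (not_adj_of_apex x A a); auto using adj_sym).
  assert (nAu1 : ~ In u1 (N A)) by (apply (not_adj_of_apex A a x); auto using adj_sym).
  assert (nAu2 : ~ In u2 (N A)) by (apply (not_adj_of_apex A a x); auto using adj_sym).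
  assert (Hnd : NoDup [x; a; A; b; u1; v1; B; u2; v2]) by distinct.
  assert (Pb : Permutation (N b) [x; B; u1; v1]).
  { apply nbrs_perm_of_incl; [distinct | reflexivity |].
    intros y Hy; simpl in Hy; intuition subst; auto using adj_sym. }
  assert (PB : Permutation (N B) [x; b; u2; v2]).
  { apply nbrs_perm_of_incl; [distinct | reflexivity |].
    intros y Hy; simpl in Hy; intuition subst; auto using adj_sym. }
  pose proof (remaining_nbrs_adjacent b x B u1 v1 Pb IB) as u1v1.
  pose proof (remaining_nbrs_adjacent B x b u2 v2 PB Ib) as u2v2.
  exists (fun p => match p with
    | (T0, T0) => x | (T0, T1) => a | (T0, T2) => A
    | (T1, T0) => b | (T1, T1) => u1 | (T1, T2) => v1
    | (T2, T0) => B | (T2, T1) => u2 | (T2, T2) => v2 end).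
  split; [exact Hnd|].
  intros [[] []] y Hy; simpl in Hy; intuition subst; auto using adj_sym.
Qed.

End QuarticGraph.

Theorem mainTheorem4 (V : Type) (N : V -> list V)
  (Hg : simple_graph N) (Hreg : regular N 4) (Hconn : connected N)
  (Hsharp : forall x, curvature_sharp N 4 x)
  (Htri : edge_in_unique_triangle N) :
  iso_to_K3xK3 N.
Proof.
  pose proof Hconn as [[x] _].
  destruct (k33_embedding V N Hg Hreg Htri x (Hsharp x)) as (g & Hnd & Hhom).
  exact (iso_of_k33_embedding V N g Hreg Hconn Hnd Hhom).
Qed.
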